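(* For every simple graph $G$ of order $n$, \[ \frac{n}{n - y(G) + 1} < \phi(G) + \frac{1}{3}. \]
   Context: Let $G$ have degrees $d_1 \ge \dots \ge d_n$. The number $y=y(G)$ is the unique real number $1 \le y \le n$ satisfying \[ y(y-1) = \sum_{k=1}^{\lfloor y \rfloor} d_k + (y - \lfloor y \rfloor)\, d_{\lceil y \rceil}. \] $\phi(G)$ is the smallest integer $r$ for which the vertex set has a partition $V(G) = V_1 \cup \dots \cup V_r$ into $r$ parts such that, writing $n_i = |V_i|$, every vertex $v \in V_i$ has degree $d(v) \le n - n_i$, for all $i = 1,\dots,r$. (It is known that $\phi(G)\le\omega(G)$, the clique number.) *)

From HB Require Import structures.
From mathcomp Require Import all_boot all_order all_algebra.
Set Implicit Arguments. Unset Strict Implicit. Unset Printing Implicit Defensive.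
Import Order.TTheory GRing.Theory Num.Theory.
Local Open Scope ring_scope.

(* A simple graph: a symmetric irreflexive relation e on a finite vertex type T. *)
Definition deg (T : finType) (e : rel T) (v : T) : nat := #|[set u | e v u]|.

(* Degree sequence d_1 >= d_2 >= ... >= d_n, stored 0-based: d_k = nth 0 (degseq e) (k-1). *)
Definition degseq (T : finType) (e : rel T) : seq nat :=
  sort geq [seq deg e v | v <- enum T].

(* y = y(G): 1 <= y <= n and
   y(y-1) = sum_{k=1}^{floor y} d_k + (y - floor y) d_{ceil y},
   where k denotes floor y (k <= y < k+1) and ceil y = k if y = k, else k+1. *)
Definition is_y (T : finType) (e : rel T) (R : rcfType) (y : R) : Prop :=
  let ds := degseq e in
  
  let n := #|T| in
  (1 <= y)%R /\ (y <= (n%:R)%R)%R /\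
  exists k : nat, ((k%:R)%R <= y)%R /\ (y < (k.+1%:R)%R)%R /\
    let c := if y == (k%:R)%R then k else k.+1 in
    (y * (y - 1) = \sum_(i < k) (nth 0%N ds i)%:R
                   + (y - k%:R) * (nth 0%N ds c.-1)%:R)%R.

(* A partition V = V_1 u ... u V_r, encoded by f : T -> 'I_r (part of v is f v),
   such that every v in V_i has d(v) <= n - n_i. *)
Definition phi_feasible (T : finType) (e : rel T) (r : nat) : bool :=
  [exists f : {ffun T -> 'I_r},
     [forall v : T, (deg e v <= #|T| - #|[set u | f u == f v]|)%N ]].

Definition is_phi (T : finType) (e : rel T) (r : nat) : Prop :=
  phi_feasible e r /\ forall r', phi_feasible e r' -> (r <= r')%N.

From HB Require Import structures.
From mathcomp Require Import all_boot all_order all_algebra.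
From mathcomp Require Import ring lra.
Import Order.TTheory GRing.Theory Num.Theory.
Set Implicit Arguments. Unset Strict Implicit. Unset Printing Implicit Defensive.
Local Open Scope ring_scope.

(* Take an optimal partition with largest class of size M, and let q be the sum
   of the squared class sizes.  Splitting every degree as d <= c + max(0, d - c),
   the equation defining y gives y(y-1) <= c y + sum_v max(0, d(v) - c); for
   c = n - M the feasibility condition d(v) <= n - n_i bounds the excess sum by
   nM - q.  With a = n - y + 1 this says a^2 - (n+1+M) a + M + q <= 0.
   Cauchy-Schwarz over the other r - 1 classes gives (r-1)(q - M^2) >= (n-M)^2,
   and this makes the quadratic positive for every a <= 3n/(3r+1), whence
   n/a < r + 1/3. *)

Lemma ler_sum_nth (R : numDomainType) (X : Type) (x0 : X) (F : X -> R) (s : seq X) (m : nat) :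
  (forall x, 0 <= F x) -> F x0 = 0 ->
  \sum_(j < m) F (nth x0 s j) <= \sum_(x <- s) F x.
Proof.
move=> F_ge0 F_x0; elim: s m => [|x s IHs] [|m].
- by rewrite big_ord0 big_nil.
- by rewrite big_nil big1 // => j _; rewrite nth_nil.
- by rewrite big_ord0 big_cons addr_ge0 ?sumr_ge0.
- by rewrite big_ord_recl big_cons lerD.
Qed.

Lemma sqr_sum_le_card_sum_sqr (R : realDomainType) (I : finType) (P : pred I) (a : I -> R) :
  (\sum_(i | P i) a i) ^+ 2 <= #|P|%:R * \sum_(i | P i) a i ^+ 2.
Proof.
set S := \sum_(i | P i) a i; set k : R := #|P|%:R.
have [P0 | P_gt0] := posnP #|P|.
  by rewrite /k P0 mul0r /S (big_pred0 _ _ _ _ (card0_eq P0)) expr0n.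
have : 0 <= \sum_(i | P i) (k * a i - S) ^+ 2 by apply: sumr_ge0 => i _; exact: sqr_ge0.
have -> : \sum_(i | P i) (k * a i - S) ^+ 2 = k * (k * \sum_(i | P i) a i ^+ 2 - S ^+ 2).
  rewrite (eq_bigr (fun i => k ^+ 2 * a i ^+ 2 - (2 * k * S) * a i + S ^+ 2)) => [|i _]; last by ring.
  rewrite big_split sumrB /= -!mulr_sumr -/S big_const iter_addr_0 -mulr_natr.
  rewrite /k; ring.
by rewrite pmulr_rge0 ?ltr0n // subr_ge0.
Qed.

Section DegreeExcess.
Variables (T : finType) (e : rel T) (R : rcfType).

Lemma is_y_le_excess (y c : R) : is_y e y -> 0 <= c ->
  y * (y - 1) <= c * y + \sum_v Num.max 0 ((deg e v)%:R - c).
Proof.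
move=> [y1 [yn [k [k_y [y_k Hy]]]]] c_ge0.
set ex := fun d : nat => Num.max 0 (d%:R - c).
have ex_ge0 d : 0 <= ex d by rewrite /ex le_max lexx.
have ex0 : ex 0%N = 0 by apply/max_idPl; rewrite sub0r oppr_le0.
have le_ex (d : nat) : d%:R <= c + ex d by rewrite -lerBlDl le_max lexx orbT.
set ds := degseq e in Hy.
have {}Hy : y * (y - 1) = \sum_(i < k) (nth 0%N ds i)%:R + (y - k%:R) * (nth 0%N ds k)%:R.
  by rewrite Hy; case: eqP => [->|_] //=; rewrite subrr !mul0r.
have sum_le : \sum_(i < k) (nth 0%N ds i)%:R <= k%:R * c + \sum_(i < k) ex (nth 0%N ds i).
  rewrite -[k in k%:R]card_ord mulr_natl -sumr_const -big_split /=.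
  by apply: ler_sum => i _; apply: le_ex.
have last_le : (y - k%:R) * (nth 0%N ds k)%:R <= (y - k%:R) * c + ex (nth 0%N ds k).
  have := le_ex (nth 0%N ds k); have := ex_ge0 (nth 0%N ds k).
  have : y - k%:R <= 1 by rewrite -addn1 natrD in y_k; lra.
  nra.
have prefix_le := @ler_sum_nth R nat 0%N ex ds k.+1 ex_ge0 ex0.
have -> : \sum_v ex (deg e v) = \sum_(d <- ds) ex d.
  by rewrite /ds /degseq (perm_big _ (permEl (perm_sort _ _))) big_map big_enum.
rewrite big_ord_recr /= in prefix_le.
lra.
Qed.

End DegreeExcess.

Section Partition.
Variables (T : finType) (r : nat) (f : T -> 'I_r).

Definition class_size (i : 'I_r) : nat := #|[set u | f u == i]|.

Lemma sum_class_size : (\sum_i class_size i)%N = #|T|.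
Proof.
rewrite -sum1_card (partition_big f xpredT) //=.
by apply: eq_bigr => i _; rewrite /class_size -sum1_card; apply: eq_bigl => u; rewrite inE.
Qed.

Lemma sum_class_size_sqr :
  (\sum_v class_size (f v) = \sum_i class_size i * class_size i)%N.
Proof.
rewrite (partition_big f xpredT) //=; apply: eq_bigr => i _.
rewrite (eq_bigr (fun=> class_size i)) => [|v /eqP <- //].
by rewrite sum_nat_const; congr (_ * _); apply: eq_card => u; rewrite inE.
Qed.

Variable i0 : 'I_r.
Hypothesis class_size_max : forall i, (class_size i <= class_size i0)%N.

Lemma card_le_mul_class_max : (#|T| <= r * class_size i0)%N.
Proof.
rewrite -sum_class_size (@leq_trans (\sum_(i < r) class_size i0)) //.
  exact: leq_sum.
by rewrite sum_nat_const card_ord.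
Qed.

Lemma class_max_sqr_le : (class_size i0 * class_size i0 <= \sum_v class_size (f v))%N.
Proof. by rewrite sum_class_size_sqr (bigD1 i0) //= leq_addr. Qed.

Lemma class_sizes_cauchy_schwarz (R : realDomainType) :
  (#|T|%:R - (class_size i0)%:R) ^+ 2
  <= (r%:R - 1) * ((\sum_v class_size (f v))%N%:R - (class_size i0)%:R * (class_size i0)%:R) :> R.
Proof.
have r_gt0 : (0 < r)%N := leq_ltn_trans (leq0n _) (ltn_ord i0).
have card_others : #|(fun i => i != i0)| = r.-1 by have := cardC1 i0; rewrite card_ord.
have := sqr_sum_le_card_sum_sqr (fun i => i != i0) (fun i => (class_size i)%:R : R).
rewrite card_others -subn1 natrB // => CS.
rewrite -sum_class_size sum_class_size_sqr !natr_sum.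
rewrite (bigD1 i0) // [X in _ * (X - _)](bigD1 i0) //= !natrM !(addrAC _ _ (- _)) !subrr !add0r.
by under [X in _ * X]eq_bigr => i _ do rewrite natrM -expr2.
Qed.

Lemma is_y_le_partition (e : rel T) (R : rcfType) (y : R) : is_y e y ->
  (forall v, deg e v <= #|T| - class_size (f v))%N ->
  y * (y - 1) <= (#|T|%:R - (class_size i0)%:R) * y
                 + #|T|%:R * (class_size i0)%:R - (\sum_v class_size (f v))%N%:R.
Proof.
move=> Hy feasible.
have c_ge0 : 0 <= #|T|%:R - (class_size i0)%:R :> R by rewrite subr_ge0 ler_nat max_card.
have card_predT : #|(fun _ : T => true)| = #|T| by apply: eq_card.
have sum_gap : \sum_v ((class_size i0)%:R - (class_size (f v))%:R)
               = #|T|%:R * (class_size i0)%:R - (\sum_v class_size (f v))%N%:R :> R.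
  by rewrite sumrB sumr_const card_predT natr_sum mulr_natl.
have excess_le : \sum_v Num.max 0 ((deg e v)%:R - (#|T|%:R - (class_size i0)%:R))
                 <= \sum_v ((class_size i0)%:R - (class_size (f v))%:R) :> R.
  apply: ler_sum => v _; rewrite ge_max subr_ge0 ler_nat class_size_max /=.
  have := feasible v; rewrite -(ler_nat R) natrB ?max_card //; lra.
have := is_y_le_excess Hy c_ge0; lra.
Qed.

End Partition.

Section RealBounds.
Variable R : rcfType.

Lemma quadratic_at_threshold_ge0 (s a0 M n : R) : 0 <= s -> n = a0 * (3 * s + 4) / 3 ->
  0 <= s * (a0 * a0 - a0 * (n + M) + M * M) + (n - M) ^+ 2.
Proof.
move=> s0 n_a0.
have s1 : 0 < 4 * (s + 1) by lra.
rewrite -(pmulr_rge0 _ s1).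
have -> : 4 * (s + 1) * (s * (a0 * a0 - a0 * (n + M) + M * M) + (n - M) ^+ 2)
   = (2 * (s + 1) * M - (3 * s + 8 / 3) * a0) ^+ 2 + s * (s / 3 + 4 / 9) * (a0 * a0).
  by rewrite n_a0; field.
apply: addr_ge0; first exact: sqr_ge0.
by apply: mulr_ge0; [apply: mulr_ge0 => //; lra | nra].
Qed.

Lemma gt_threshold_one_class (n q a : R) : 1 <= a -> n * n <= q ->
  a * a - a * (n + 1 + n) + n + q <= 0 -> 3 * n < 4 * a.
Proof. by move=> a1 nq Fa; nra. Qed.

Lemma gt_threshold_of_quadratic (s n M q a : R) : 1 <= s -> 1 <= a ->
  n <= (s + 1) * M -> (n - M) ^+ 2 <= s * (q - M * M) ->
  a * a - a * (n + 1 + M) + M + q <= 0 -> 3 * n < (3 * s + 4) * a.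
Proof.
move=> s1 a1 nM CS Fa; rewrite ltNge; apply/negP => a_small.
have s34 : 0 < 3 * s + 4 by lra.
set a0 := n * 3 / (3 * s + 4).
have n_a0 : n = a0 * (3 * s + 4) / 3 by rewrite /a0; field; lra.
have n_gt0 : 0 < n by nra.
have a0_gt0 : 0 < a0 by rewrite /a0 divr_gt0 //; lra.
have a_a0 : a <= a0 by rewrite /a0 ler_pdivlMr //; lra.
have a0_M : a0 < M.
  have : (s + 1) * a0 < (s + 1) * M by apply: lt_le_trans nM; rewrite n_a0; lra.
  by rewrite ltr_pM2l //; lra.
have a0_n : a0 * 7 <= 3 * n by rewrite n_a0; nra.
have F_a0 : 0 <= a0 * a0 - a0 * (n + M) + q.
  have sos := quadratic_at_threshold_ge0 M (le_trans ler01 s1) n_a0.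
  rewrite -(pmulr_rge0 _ (lt_le_trans ltr01 s1)).
  have -> : s * (a0 * a0 - a0 * (n + M) + q)
          = s * (a0 * a0 - a0 * (n + M) + M * M) + s * (q - M * M) by ring.
  lra.
(* The quadratic at a is [a0^2 - a0 (n+M) + q] + (M - a0)
   + (a0 - a)(n + 1 + M - a - a0), a sum of nonnegative terms with M - a0 > 0. *)
have : 0 <= (a0 - a) * (n + 1 + M - a - a0) by apply: mulr_ge0; lra.
nra.
Qed.

Lemma ratio_lt_of_quadratic (r : nat) (n M q y : R) : (0 < r)%N ->
  1 <= y -> y <= n -> n <= r%:R * M -> M * M <= q ->
  (n - M) ^+ 2 <= (r%:R - 1) * (q - M * M) ->
  y * (y - 1) <= (n - M) * y + n * M - q ->
  n / (n - y + 1) < r%:R + 1 / 3.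
Proof.
move=> r_gt0 y1 yn nM Mq CS Hy.
set a := n - y + 1.
have a1 : 1 <= a by rewrite /a; lra.
have Fa : a * a - a * (n + 1 + M) + M + q <= 0.
  have y_a : y = n + 1 - a by rewrite /a; ring.
  by rewrite y_a in Hy; nra.
rewrite ltr_pdivrMr; last lra.
case: r r_gt0 nM CS => [//|[_ _ CS|r _ nM CS]].
- have M_n : M = n.
    apply/eqP; rewrite eq_sym -subr_eq0 -sqrf_eq0 eq_le sqr_ge0 andbT.
    by rewrite subrr mul0r in CS.
  rewrite M_n in Mq Fa.
  have := gt_threshold_one_class a1 Mq Fa; lra.
- have s1 : 1 <= r.+2%:R - 1 :> R by rewrite -addn1 natrD addrK ler1n.
  rewrite -[r.+2%:R](subrK 1) in nM.
  have := gt_threshold_of_quadratic s1 a1 nM CS Fa; lra.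
Qed.

End RealBounds.

Theorem theorem11 (T : finType) (e : rel T)
  (esym : symmetric e) (eirr : irreflexive e)
  (R : rcfType) (y : R) (r : nat) :
  is_y e y -> is_phi e r ->
  (#|T|%:R / (#|T|%:R - y + 1) < r%:R + 1 / 3%:R)%R.
Proof.
move=> Hy [/existsP[f /forallP feasible] _].
have [y_ge1 [y_le_n _]] := Hy.
have [v0 _] : exists v0 : T, v0 \in T by apply/card_gt0P; rewrite -(ltr_nat R); lra.
have [i0 _ i0_max] := @arg_maxnP _ (f v0) xpredT (class_size f) isT.
have class_size_max i : (class_size f i <= class_size f i0)%N by exact: i0_max.
apply: (@ratio_lt_of_quadratic _ r _ (class_size f i0)%:R (\sum_v class_size f (f v))%N%:R).
- exact: leq_ltn_trans (leq0n _) (ltn_ord (f v0)).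
- exact: y_ge1.
- exact: y_le_n.
- by rewrite -natrM ler_nat card_le_mul_class_max.
- by rewrite -natrM ler_nat class_max_sqr_le.
- exact: class_sizes_cauchy_schwarz.
- exact (is_y_le_partition class_size_max Hy feasible).
Qed.
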